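(* In the setting below, let $a,b\in\mathbb{C}$ be such that $aI+\Gamma$ and $bI+\Gamma$ are invertible, and suppose $I+M(n,m)$ is invertible for all $(n,m)\in\mathbb{Z}^2$. Then $S(a,b)=c\,(bI+\Gamma)^{-1}(I+M)^{-1}(aI+\Gamma)^{-1}r$ satisfies the NQC equation $$\frac{1-(p+b)\hat{\tilde S}(a,b)+(p-a)\hat S(a,b)}{1-(q+b)\hat{\tilde S}(a,b)+(q-a)\tilde S(a,b)}=\frac{1-(q+a)\hat S(a,b)+(q-b)S(a,b)}{1-(p+a)\tilde S(a,b)+(p-b)S(a,b)}$$ (wherever the denominators are nonzero).
   Context: Setting: $p,q\in\mathbb{C}$; $\tilde f(n,m)=f(n+1,m)$, $\hat f(n,m)=f(n,m+1)$, $\hat{\tilde f}(n,m)=f(n+1,m+1)$. $\Gamma=\mathrm{Diag}(\mathrm{Diag}(k_1,\dots,k_{N_1}),\Gamma_J^{[N_2]}(\kappa_2),\dots,\Gamma_J^{[N_s]}(\kappa_s))$ with $\Gamma^{[N]}_J(\kappa)$ the $N\times N$ matrix with $\kappa$ on the diagonal and $1$ on the subdiagonal; all eigenvalues $\lambda,\mu$ of $\Gamma$ satisfy $\lambda+\mu\ne0$, and $p,q\notin\{\pm\lambda\}$. $c=(c^{(1)},\dots,c^{(s)})$ a constant row vector (block lengths $N_1,\dots,N_s$). With $\rho(k)=\big(\tfrac{p+k}{p-k}\big)^n\big(\tfrac{q+k}{q-k}\big)^m\rho^0$ and $\rho_i=\rho(k_i)$: $r=(\rho_1,\dots,\rho_{N_1},r_J(\kappa_2),\dots,r_J(\kappa_s))^T$,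 $r_J(\kappa)=(\partial_k^l\rho/l!|_{k=\kappa})_{l=0}^{N_j-1}$; $M=\mathcal{A}FGH$ where $F=\mathrm{Diag}(\rho_1,\dots,\rho_{N_1},F_J(\kappa_2),\dots)$ with $F_J(\kappa)$ lower triangular, $(i,j)$ entry $\partial_k^{i-j}\rho|_{\kappa}/(i-j)!$; $H=\mathrm{Diag}(c_1,\dots,c_{N_1},H_J(c^{(2)}),\dots)$ with $H_J(d)$ having $(i,j)$ entry $d_{i+j-1}$ if $i+j-1\le N_j$ else $0$; $G$ symmetric block matrix with $G_{1,1}=(1/(k_i+k_j))$, $G_{1,j}$ with $(l,t)$ entry $-(-1/(k_l+\kappa_j))^t$, $G_{i,j}$ ($1<i\le j$) with $(l,t)$ entry $\binom{l+t-2}{l-1}(-1)^{l+t}/(\kappa_i+\kappa_j)^{l+t-1}$; and $r$ is replaced by $\mathcal{A}r$, where $\mathcal{A}=\mathrm{Diag}(I_{N_1},\mathcal{A}_2,\dots,\mathcal{A}_s)$, each $\mathcal{A}_j$ a constant lower triangular Toeplitz matrix. *)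

From HB Require Import structures.
From mathcomp Require Import all_boot all_order all_algebra.
Set Implicit Arguments. Unset Strict Implicit. Unset Printing Implicit Defensive.
Import Order.TTheory GRing.Theory Num.Theory.
Local Open Scope ring_scope.

Section NQC.
Variable C : numClosedFieldType.

(** A Jordan-type block: (kappa, c-vector, a-vector).  Its size N_j is the
    length of the c-vector; the a-vector is the first column of the constant
    lower-triangular Toeplitz matrix A_j. *)
Definition block := (C * seq C * seq C)%type.
Definition bk (B : block) : C := B.1.1.
Definition bc (B : block) : seq C := B.1.2.
Definition ba (B : block) : seq C := B.2.
Definition bsz (B : block) : nat := size (bc B).
Definition block0 : block := ((0, [::]), [::]).

(** All blocks: the diagonal part Diag(k_1..k_{N1}) is seen as N1 blocks of
    size 1 with c-entry c_i and with A-block 1 (since A = Diag(I_{N1},...)),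
    followed by the Jordan blocks. *)
Definition all_blocks (ks cs : seq C) (J : seq block) : seq block :=
  map (fun kc => ((kc.1, [:: kc.2]), [:: 1])) (zip ks cs) ++ J.

(** index i  |->  (block number, 0-based position inside the block) *)
Definition idx (BL : seq block) : seq (nat * nat) :=
  flatten [seq [seq (j, l) | l <- iota 0 (bsz (nth block0 BL j))]
          | j <- iota 0 (size BL)].
Definition dim (BL : seq block) : nat := size (idx BL).

Section Blocks.
Variable BL : seq block.
Definition blk (i : 'I_(dim BL)) : nat := (nth (0, 0)%N (idx BL) i).1.
Definition pos (i : 'I_(dim BL)) : nat := (nth (0, 0)%N (idx BL) i).2.
Definition blkof (i : 'I_(dim BL)) : block := nth block0 BL (blk i).
Definition kap (i : 'I_(dim BL)) : C := bk (blkof i).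
End Blocks.

Definition rderiv (f : {poly C} * {poly C}) : {poly C} * {poly C} :=
  (f.1^`() * f.2 - f.1 * f.2^`(), f.2 ^+ 2).
Definition taylor_rat (f : {poly C} * {poly C}) (l : nat) (x : C) : C :=
  let g := iter l rderiv f in (g.1.[x] / g.2.[x]) / (l`!)%:R.

Definition powfrac (u v : {poly C}) (n : int) : {poly C} * {poly C} :=
  match n with
  | Posz k => (u ^+ k, v ^+ k)
  | Negz k => (v ^+ k.+1, u ^+ k.+1)
  end.

Definition rho_frac (p q rho0 : C) (n m : int) : {poly C} * {poly C} :=
  let a := powfrac ('X + p%:P) (p%:P - 'X) n in
  let b := powfrac ('X + q%:P) (q%:P - 'X) m in
  (rho0%:P * a.1 * b.1, a.2 * b.2).

Definition tau (p q rho0 : C) (n m : int) (l : nat) (x : C) : C :=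
  taylor_rat (rho_frac p q rho0 n m) l x.

Section Matrices.
Variables (BL : seq block) (p q rho0 : C).
Local Notation N := (dim BL).
Local Notation blk := (@blk BL).
Local Notation pos := (@pos BL).
Local Notation kap := (@kap BL).
Local Notation blkof := (@blkof BL).

Definition Gam : 'M[C]_N :=
  \matrix_(i, j) if blk i == blk j then
                   (if pos i == pos j then kap i
                    else if pos i == (pos j).+1 then 1 else 0)
                 else 0.

Definition Fm (n m : int) : 'M[C]_N :=
  \matrix_(i, j) if (blk i == blk j) && (pos j <= pos i)%N
                 then tau p q rho0 n m (pos i - pos j) (kap i) else 0.

Definition Hm : 'M[C]_N :=
  \matrix_(i, j) if (blk i == blk j) && (pos i + pos j < bsz (blkof i))%N
                 then nth 0 (bc (blkof i)) (pos i + pos j) else 0.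

Definition Gm : 'M[C]_N :=
  \matrix_(i, j) ((binomial (pos i + pos j) (pos i))%:R * (-1) ^+ (pos i + pos j)
                   / (kap i + kap j) ^+ (pos i + pos j).+1).

Definition Am : 'M[C]_N :=
  \matrix_(i, j) if (blk i == blk j) && (pos j <= pos i)%N
                 then nth 0 (ba (blkof i)) (pos i - pos j) else 0.

Definition rv (n m : int) : 'cV[C]_N := \col_i tau p q rho0 n m (pos i) (kap i).

Definition cv : 'rV[C]_N := \row_j nth 0 (bc (blkof j)) (pos j).

Definition Mm (n m : int) : 'M[C]_N := Am *m Fm n m *m Gm *m Hm.

Definition Sab (a b : C) (n m : int) : C :=
  (cv *m invmx (b%:M + Gam) *m invmx (1%:M + Mm n m)
      *m invmx (a%:M + Gam) *m (Am *m rv n m)) 0 0.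

End Matrices.
End NQC.

From Pilot Require Import Defs.
From HB Require Import structures.
From mathcomp Require Import all_boot all_order all_algebra.
From mathcomp Require Import ring zify.
Import Order.TTheory GRing.Theory Num.Theory.
Set Implicit Arguments. Unset Strict Implicit. Unset Printing Implicit Defensive.
Local Open Scope ring_scope.

(* Algebraically
   (section Resolvents), for any matrix Gamma, invertible U, U', vectors r, r'
   and covector c such that r' is a dispersion shift of r,
   (p - Gamma) r' = (p + Gamma) r, and U' differs from U by a rank-one
   displacement, the combination 1 - (p + b) S' + (p - a) S (and its mirror
   image) factors as a product of two simpler resolvent expressions.  Applied
   at the four shifts in n and m, the two numerators and two denominators of
   the NQC equation become products of the same four factors.
   Structurally we check the hypotheses for the concrete matrices:
   - TaylorCoefficients: the Taylor coefficients of rho satisfy the scalar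
     dispersion relations in n and in m (Leibniz rule on quotient-rule iterates);
   - BlockMatrices: a kernel calculus on (block, position) indices; A and F are
     Toeplitz, hence commute with Gamma, H intertwines Gamma with its transpose,
     and G solves the Lyapunov equation Gamma G + G Gamma^T = e e^T;
   - Structure: hence M = A F G H solves Gamma M + M Gamma = r c, and the
     dispersion relations of F lift to r and to M, giving the rank-one
     displacements of U = I + M required by the factorizations. *)

Section Resolvents.
Variables (F : fieldType) (N : nat).

(* A scalar shift of [G] commutes with anything commuting with [G]; this is
   what lets the resolvents (a + G)^-1 pass through the factors p +- G. *)
Lemma resolvent_comm (a : F) (G X : 'M[F]_N) :
  (a%:M + G) \in unitmx -> comm_mx G X ->
  invmx (a%:M + G) *m X = X *m invmx (a%:M + G).
Proof.
move=> uA hGX.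
have hAX : (a%:M + G) *m X = X *m (a%:M + G).
  by apply: comm_mx_sym; apply: comm_mxD; [apply: comm_mx_scalar | apply: comm_mx_sym].
have -> : invmx (a%:M + G) *m X = invmx (a%:M + G) *m X *m ((a%:M + G) *m invmx (a%:M + G)).
  by rewrite mulmxV // mulmx1.
by rewrite !mulmxA -(mulmxA _ X) -hAX mulmxA mulVmx // mul1mx.
Qed.

Lemma comm_mx_shiftD (p : F) (G : 'M[F]_N) : comm_mx G (p%:M + G).
Proof. by apply: comm_mxD; [apply: comm_mx_scalar | apply: comm_mx_refl]. Qed.

Lemma comm_mx_shiftB (p : F) (G : 'M[F]_N) : comm_mx G (p%:M - G).
Proof. by apply: comm_mxB; [apply: comm_mx_scalar | apply: comm_mx_refl]. Qed.

Lemma resolvent_shiftD (a p : F) (G : 'M[F]_N) : (a%:M + G) \in unitmx ->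
  invmx (a%:M + G) *m (p%:M + G) = (p - a) *: invmx (a%:M + G) + 1%:M.
Proof.
move=> uA; have -> : p%:M + G = (p - a)%:M + (a%:M + G).
  by rewrite addrA -raddfD subrK.
by rewrite mulmxDr mul_mx_scalar mulVmx.
Qed.

Lemma resolvent_shiftB (a p : F) (G : 'M[F]_N) : (a%:M + G) \in unitmx ->
  invmx (a%:M + G) *m (p%:M - G) = (p + a) *: invmx (a%:M + G) - 1%:M.
Proof.
move=> uA; have -> : p%:M - G = (p + a)%:M - (a%:M + G).
  by rewrite opprD addrA -raddfB addrK.
by rewrite mulmxBr mul_mx_scalar mulVmx.
Qed.

Lemma mulmx11r (X : 'M[F]_1) (k : nat) (v : 'M[F]_(k, 1)) : v *m X = X 0 0 *: v.
Proof. by rewrite {1}[X]mx11_scalar mul_mx_scalar. Qed.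

Lemma mulmx11l (X : 'M[F]_1) (k : nat) (v : 'M[F]_(1, k)) : X *m v = X 0 0 *: v.
Proof. by rewrite {1}[X]mx11_scalar mul_scalar_mx. Qed.

Lemma mx11D (X Y : 'M[F]_1) : (X + Y) 0 0 = X 0 0 + Y 0 0. Proof. by rewrite mxE. Qed.
Lemma mx11B (X Y : 'M[F]_1) : (X - Y) 0 0 = X 0 0 - Y 0 0. Proof. by rewrite !mxE. Qed.
Lemma mx11N (X : 'M[F]_1) : (- X) 0 0 = - X 0 0. Proof. by rewrite mxE. Qed.
Lemma mx11Z (k : F) (X : 'M[F]_1) : (k *: X) 0 0 = k * X 0 0. Proof. by rewrite mxE. Qed.
Definition mx11E := (mx11D, mx11B, mx11N, mx11Z).

Lemma resolvent_factor_left (G U U' : 'M[F]_N) (r r' : 'cV[F]_N) (c : 'rV[F]_N)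
    (a b p : F) :
  (a%:M + G) \in unitmx -> (b%:M + G) \in unitmx ->
  U \in unitmx -> U' \in unitmx ->
  (p%:M - G) *m r' = (p%:M + G) *m r ->
  (p%:M - G) *m U' - U *m (p%:M - G) = r *m c ->
  1 - (p + b) * (c *m invmx (b%:M + G) *m invmx U' *m invmx (a%:M + G) *m r') 0 0
    + (p - a) * (c *m invmx (b%:M + G) *m invmx U *m invmx (a%:M + G) *m r) 0 0
  = (1 - (c *m invmx U' *m invmx (a%:M + G) *m r') 0 0)
    * (1 - (c *m invmx (b%:M + G) *m invmx U *m r) 0 0).
Proof.
move=> uA uB uU uU' hr hU.
set Ai := invmx (a%:M + G); set Bi := invmx (b%:M + G).
set x := invmx U' *m Ai *m r'; set Y' := (c *m x) 0 0.
have Ux : U *m ((p%:M - G) *m x) = (p - a) *: (Ai *m r) + (1 - Y') *: r.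
  have UQ : U *m (p%:M - G) = (p%:M - G) *m U' - r *m c.
    by rewrite -hU opprB [RHS]addrC subrK.
  have U'x : U' *m x = Ai *m r' by rewrite /x !mulmxA mulmxV // mul1mx.
  rewrite mulmxA UQ mulmxBl -mulmxA U'x mulmxA.
  rewrite -(resolvent_comm uA (comm_mx_shiftB p G)) -mulmxA hr mulmxA.
  rewrite resolvent_shiftD // -mulmxA (mulmx11r (c *m x)) -/Y'.
  by rewrite mulmxDl mul1mx -scalemxAl (scalerBl _ _ r) scale1r addrA.
have := congr1 (mulmx (c *m Bi *m invmx U)) Ux.
rewrite -mulmxA (mulmxA (invmx U)) mulVmx // mul1mx.
rewrite (mulmxA _ (p%:M - G)) -(mulmxA c) resolvent_shiftB // mulmxBr mulmx1.
rewrite mulmxDr -!scalemxAr mulmxBl -!scalemxAl.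
move=> /(congr1 (fun X : 'M[F]_1 => X 0 0)).
rewrite !mx11E; rewrite /Y' /x !mulmxA.
set S' := (c *m Bi *m invmx U' *m Ai *m r') 0 0.
set S := (c *m Bi *m invmx U *m Ai *m r) 0 0.
set W := (c *m Bi *m invmx U *m r) 0 0; set Z := (c *m invmx U' *m Ai *m r') 0 0.
move=> e; have -> : (p + b) * S' = (p - a) * S + (1 - Z) * W + Z by rewrite -e subrK.
ring.
Qed.

Lemma resolvent_factor_right (G U U' : 'M[F]_N) (r r' : 'cV[F]_N) (c : 'rV[F]_N)
    (a b p : F) :
  (a%:M + G) \in unitmx -> (b%:M + G) \in unitmx ->
  U \in unitmx -> U' \in unitmx ->
  (p%:M - G) *m r' = (p%:M + G) *m r ->
  U' *m (p%:M + G) - (p%:M + G) *m U = r' *m c ->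
  1 - (p + a) * (c *m invmx (b%:M + G) *m invmx U' *m invmx (a%:M + G) *m r') 0 0
    + (p - b) * (c *m invmx (b%:M + G) *m invmx U *m invmx (a%:M + G) *m r) 0 0
  = (1 - (c *m invmx (b%:M + G) *m invmx U' *m r') 0 0)
    * (1 - (c *m invmx U *m invmx (a%:M + G) *m r) 0 0).
Proof.
move=> uA uB uU uU' hr hU.
set Ai := invmx (a%:M + G); set Bi := invmx (b%:M + G).
set z := c *m Bi *m invmx U'; set W' := (z *m r') 0 0.
have zU : z *m (p%:M + G) *m U = (p - b) *: (c *m Bi) + (1 - W') *: c.
  have PU : (p%:M + G) *m U = U' *m (p%:M + G) - r' *m c.
    by rewrite -hU opprB [RHS]addrC subrK.
  have zU' : z *m U' = c *m Bi by rewrite /z -mulmxA mulVmx // mulmx1.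
  rewrite -mulmxA PU mulmxBr mulmxA zU' -mulmxA resolvent_shiftD //.
  rewrite mulmxA (mulmx11l (z *m r')) -/W'.
  by rewrite mulmxDr mulmx1 -scalemxAr (scalerBl _ _ c) scale1r addrA.
have := congr1 (mulmx^~ (invmx U *m Ai *m r)) zU.
rewrite /= !mulmxA -(mulmxA _ U) mulmxV // mulmx1.
rewrite -(mulmxA z) -(mulmxA z) -(resolvent_comm uA (comm_mx_shiftD p G)).
rewrite -/Ai -[z *m _ *m r]mulmxA -(mulmxA Ai) -hr (mulmxA Ai) resolvent_shiftB // mulmxBl mul1mx.
rewrite -scalemxAl mulmxBr !mulmxDl -!scalemxAl -!scalemxAr.
move=> /(congr1 (fun X : 'M[F]_1 => X 0 0)).
rewrite !mx11E; rewrite /W' /z !mulmxA.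
set S' := (c *m Bi *m invmx U' *m Ai *m r') 0 0.
set S := (c *m Bi *m invmx U *m Ai *m r) 0 0.
set Y := (c *m invmx U *m Ai *m r) 0 0; set Z := (c *m Bi *m invmx U' *m r') 0 0.
move=> e; have -> : (p + a) * S' = (p - b) * S + (1 - Z) * Y + Z by rewrite -e subrK.
ring.
Qed.
End Resolvents.

Section TaylorCoefficients.
Variable C : numClosedFieldType.
Implicit Types f g : {poly C} * {poly C}.
Local Notation rd := (@rderiv C).

Lemma rderiv_equiv f g : f.1 * g.2 = g.1 * f.2 ->
  (rd f).1 * (rd g).2 = (rd g).1 * (rd f).2.
Proof.
case: f g => A1 B1 [A2 B2] /= H.
have H' := congr1 deriv H; rewrite !derivM in H'.
apply/eqP; rewrite -subr_eq0; apply/eqP.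
have -> : (A1^`() * B1 - A1 * B1^`()) * B2 ^+ 2 - (A2^`() * B2 - A2 * B2^`()) * B1 ^+ 2
  = B1 * B2 * ((A1^`() * B2 + A1 * B2^`()) - (A2^`() * B1 + A2 * B1^`()))
    - (B1 * B2^`() + B1^`() * B2) * (A1 * B2 - A2 * B1) by ring.
by rewrite H' H !subrr !mulr0 subrr.
Qed.

Lemma iter_rderiv_equiv f g l : f.1 * g.2 = g.1 * f.2 ->
  (iter l rd f).1 * (iter l rd g).2 = (iter l rd g).1 * (iter l rd f).2.
Proof. by move=> H; elim: l => [|l IH] //=; apply: rderiv_equiv. Qed.

Lemma iter_rderiv_den f l : (iter l rd f).2 = f.2 ^+ (2 ^ l).
Proof.
elim: l => [|l IH] /=; first by rewrite expr1.
by rewrite IH -exprM expnS mulnC.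
Qed.

Lemma iter_rderiv_den_mulN (h : {poly C}) f l :
  (iter l rd (h * f.1, f.2)).2 = (iter l rd f).2.
Proof. by rewrite !iter_rderiv_den. Qed.

Lemma iter_rderiv_den_neq0 f l x : f.2.[x] != 0 -> (iter l rd f).2.[x] != 0.
Proof. by move=> h; rewrite iter_rderiv_den horner_exp expf_neq0. Qed.

Lemma taylor_equiv f g l x : f.1 * g.2 = g.1 * f.2 ->
  f.2.[x] != 0 -> g.2.[x] != 0 -> taylor_rat f l x = taylor_rat g l x.
Proof.
move=> H hf hg; rewrite /taylor_rat; congr (_ / _).
have := iter_rderiv_equiv l H => /(congr1 (horner^~ x)); rewrite !hornerM => e.
have hf' := iter_rderiv_den_neq0 l hf; have hg' := iter_rderiv_den_neq0 l hg.
by apply/eqP; rewrite eqr_div // e.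
Qed.

Definition rderiv_corr f l : {poly C} :=
  if l is l'.+1 then (iter l' rd f).1 * (iter l' rd f).2 else 0.

Lemma iter_rderiv_linear (h : {poly C}) (be : C) f l : h^`() = be%:P ->
  (iter l rd (h * f.1, f.2)).1 = h * (iter l rd f).1 + (l%:R * be)%:P * rderiv_corr f l.
Proof.
move=> hh; elim: l => [|l IH]; first by rewrite /= mul0r polyC0 mul0r addr0.
rewrite iterS [X in X.1]/rderiv /= IH iter_rderiv_den_mulN.
rewrite !derivD !derivM hh derivC mul0r add0r.
case: l {IH} => [|l] /=.
  rewrite mul0r polyC0 !mul0r !addr0 mul1r.
  move: (f.1) (f.2) (be%:P) => A B bP; move: (A^`()) (B^`()) => A' B'.
  ring.
rewrite !derivB !derivM; set g0 := iter l rd f.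
move: (g0.1) (g0.2) => A B.
move: (A^`()) (B^`()) ((A^`())^`()) ((B^`())^`()) => A' B' A'' B''.
rewrite -[(l.+2)%:R]natr1 -[(l.+1)%:R]natr1 !polyCM !polyCD !polyC1.
move: (l%:R%:P) (be%:P) => L bP.
ring.
Qed.

Lemma taylor_linear (h : {poly C}) (be : C) f l x : h^`() = be%:P -> f.2.[x] != 0 ->
  taylor_rat (h * f.1, f.2) l x
  = h.[x] * taylor_rat f l x + be * (if l is l'.+1 then taylor_rat f l' x else 0).
Proof.
move=> hh hx; rewrite /taylor_rat /= iter_rderiv_den_mulN (iter_rderiv_linear _ _ hh).
case: l => [|l] /=.
  by rewrite mul0r polyC0 mul0r addr0 mulr0 addr0 hornerM !mulrA.
set g0 := iter l rd f.
have hE : g0.2.[x] != 0 by apply: iter_rderiv_den_neq0.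
have hF : (l`!)%:R != 0 :> C by rewrite pnatr_eq0 -lt0n fact_gt0.
have hl : (l.+1)%:R != 0 :> C by rewrite pnatr_eq0.
rewrite hornerD !hornerM hornerC factS natrM.
move: (((g0.1)^`() * g0.2 - g0.1 * (g0.2)^`()).[x]) => A1.
move: (g0.1).[x] (g0.2).[x] hE => A B hE.
field.
by rewrite hF hE addrC natr1 hl.
Qed.

Lemma taylor_shift (s x : C) f g :
  (s%:P - 'X) * f.1 * g.2 = ('X + s%:P) * g.1 * f.2 ->
  f.2.[x] != 0 -> g.2.[x] != 0 -> forall d,
  (s - x) * taylor_rat f d x - (if d is d'.+1 then taylor_rat f d' x else 0)
  = (s + x) * taylor_rat g d x + (if d is d'.+1 then taylor_rat g d' x else 0).
Proof.
move=> hfg hf hg d.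
have dXs : ('X + s%:P)^`() = 1%:P by rewrite derivD derivX derivC addr0.
have dsX : (s%:P - 'X)^`() = (-1)%:P by rewrite derivB derivX derivC sub0r polyCN.
have := @taylor_equiv ((s%:P - 'X) * f.1, f.2) (('X + s%:P) * g.1, g.2) d x hfg hf hg.
have evB : (s%:P - 'X).[x] = s - x by rewrite hornerD hornerN hornerC hornerX.
have evD : ('X + s%:P).[x] = s + x by rewrite hornerD hornerX hornerC addrC.
rewrite (taylor_linear d dsX hf) (taylor_linear d dXs hg) evB evD.
move: (if d is d'.+1 then taylor_rat f d' x else 0) => Pf.
move: (if d is d'.+1 then taylor_rat g d' x else 0) => Pg.
by rewrite mulN1r mul1r => ->.
Qed.

Lemma powfrac_shift (u v : {poly C}) (n : int) :
  v * (powfrac u v (n + 1)).1 * (powfrac u v n).2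
  = u * (powfrac u v n).1 * (powfrac u v (n + 1)).2.
Proof.
case: n => [k|[|k]].
- have -> : Posz k + 1 = Posz k.+1 by rewrite -addn1 PoszD.
  by rewrite /= !exprS; ring.
- by rewrite /= !expr1 !expr0; ring.
- have -> : Negz k.+1 + 1 = Negz k by rewrite !NegzE; lia.
  by rewrite /= !exprS; ring.
Qed.

Lemma powfrac_den_neq0 (u v : {poly C}) (n : int) x :
  u.[x] != 0 -> v.[x] != 0 -> (powfrac u v n).2.[x] != 0.
Proof. by move=> hu hv; case: n => k /=; rewrite horner_exp expf_neq0. Qed.

Lemma tau_sym (p q rho0 : C) (n m : int) : tau p q rho0 n m = tau q p rho0 m n.
Proof. by rewrite /tau /rho_frac mulrAC [_.2 * _]mulrC. Qed.

Lemma rho_shift (p q rho0 : C) (n m : int) :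
  (p%:P - 'X) * (rho_frac p q rho0 (n + 1) m).1 * (rho_frac p q rho0 n m).2
  = ('X + p%:P) * (rho_frac p q rho0 n m).1 * (rho_frac p q rho0 (n + 1) m).2.
Proof.
rewrite /rho_frac /=.
have := powfrac_shift ('X + p%:P) (p%:P - 'X) n.
move: (powfrac _ _ n) (powfrac _ _ (n + 1)) (powfrac ('X + q%:P) (q%:P - 'X) m).
move=> A A' B e.
transitivity ((p%:P - 'X) * A'.1 * A.2 * (rho0%:P * B.1 * B.2)); first by ring.
by rewrite e; ring.
Qed.

Lemma rho_den_neq0 (p q rho0 : C) (n m : int) x :
  p != x -> p != - x -> q != x -> q != - x -> (rho_frac p q rho0 n m).2.[x] != 0.
Proof.
move=> h1 h2 h3 h4.
have hu z : z != - x -> ('X + z%:P).[x] != 0 by rewrite !hornerE addrC addr_eq0.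
have hv z : z != x -> (z%:P - 'X).[x] != 0 by rewrite !hornerE subr_eq0.
by rewrite /rho_frac /= hornerM mulf_neq0 // powfrac_den_neq0 ?hu ?hv.
Qed.

(* The Taylor coefficients tau_d(x) of rho inherit the dispersion relations
   in n and in m; this is the scalar content of (p - Gamma) F~ = (p + Gamma) F. *)
Lemma tau_shift_n (p q rho0 : C) (n m : int) x :
  p != x -> p != - x -> q != x -> q != - x -> forall d,
  (p - x) * tau p q rho0 (n + 1) m d x
    - (if d is d'.+1 then tau p q rho0 (n + 1) m d' x else 0)
  = (p + x) * tau p q rho0 n m d x
    + (if d is d'.+1 then tau p q rho0 n m d' x else 0).
Proof.
move=> h1 h2 h3 h4; apply: taylor_shift; first exact: rho_shift.
  exact: rho_den_neq0.
exact: rho_den_neq0.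
Qed.

Lemma tau_shift_m (p q rho0 : C) (n m : int) x :
  p != x -> p != - x -> q != x -> q != - x -> forall d,
  (q - x) * tau p q rho0 n (m + 1) d x
    - (if d is d'.+1 then tau p q rho0 n (m + 1) d' x else 0)
  = (q + x) * tau p q rho0 n m d x
    + (if d is d'.+1 then tau p q rho0 n m d' x else 0).
Proof. by move=> h1 h2 h3 h4 d; rewrite !(tau_sym p q); apply: tau_shift_n. Qed.

End TaylorCoefficients.

Section CauchyCoefficients.
Variable C : numClosedFieldType.

(* Entries of the Cauchy-type block G_{i,j}:  (l, t) |-> binom(l+t, l) (-1)^(l+t) / s^(l+t+1),
   i.e. the Taylor coefficients of 1/(k + k') at k + k' = s. *)
Definition cauchy_coef (s : C) (l t : nat) : C :=
  ('C(l + t, l))%:R * (-1) ^+ (l + t) / s ^+ (l + t).+1.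

Lemma cauchy_coef_rec (s : C) l t : s != 0 ->
  s * cauchy_coef s l t + (if l is l'.+1 then cauchy_coef s l' t else 0)
    + (if t is t'.+1 then cauchy_coef s l t' else 0)
  = (l == 0%N)%:R * (t == 0%N)%:R.
Proof.
move=> hs; rewrite /cauchy_coef.
case: l => [|L]; case: t => [|T] /=.
- by rewrite !addr0 bin0 !expr0 !mul1r expr1 mulrC mulVf // mul1r.
- rewrite !add0n !bin0 !exprS; have := expf_neq0 T hs; move: (s ^+ T) => e he.
  by field; rewrite hs he.
- rewrite !addn0 !binn !exprS; have := expf_neq0 L hs; move: (s ^+ L) => e he.
  by field; rewrite hs he.
- rewrite !addSn !addnS binS natrD !exprS; have := expf_neq0 (L + T) hs.
  move: (s ^+ (L + T)) => e he.
  by field; rewrite hs he.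
Qed.
End CauchyCoefficients.

Section BlockMatrices.
Variable C : numClosedFieldType.
Variable BL : seq (block C).
Local Notation N := (Defs.dim BL).
Local Notation nb := (size BL).

(* Matrix indices are pairs (block number, position inside the block).  All
   the matrices of the statement are given by kernels on such pairs; this
   section develops the corresponding calculus. *)
Definition block_at (x : nat * nat) : block C := nth (block0 C) BL x.1.
Definition kappa_at (x : nat * nat) : C := bk (block_at x).
Definition bsize (j : nat) : nat := bsz (nth (block0 C) BL j).
Definition valid_pos (x : nat * nat) : bool := (x.1 < nb)%N && (x.2 < bsize x.1)%N.
Definition pos_of (i : 'I_N) : nat * nat := nth (0, 0)%N (idx BL) i.

Lemma pos_of_valid (i : 'I_N) : valid_pos (pos_of i).
Proof.
have /flattenP [s /mapP [j]] : pos_of i \in idx BL by rewrite /pos_of mem_nth.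
rewrite mem_iota add0n => /andP [_ hj] -> /mapP [l].
by rewrite mem_iota add0n => /andP [_ hl] ->; rewrite /valid_pos /= hj.
Qed.

Definition psum (h : nat * nat -> C) : C :=
  \sum_(j < nb) \sum_(l < bsize j) h (val j, val l).

Lemma sum_positions (h : nat * nat -> C) : \sum_(k < N) h (pos_of k) = psum h.
Proof.
transitivity (\sum_(x <- idx BL) h x); first by rewrite (big_nth (0,0)%N) big_mkord.
have iota0 k : iota 0 k = index_iota 0 k by rewrite /index_iota subn0.
rewrite /idx big_flatten /= big_map iota0 big_mkord; apply: eq_bigr => j _.
by rewrite big_map iota0 big_mkord.
Qed.

Definition mx_of (f : nat * nat -> nat * nat -> C) : 'M[C]_N :=
  \matrix_(i, j) f (pos_of i) (pos_of j).
Definition col_of (f : nat * nat -> C) : 'cV[C]_N := \col_i f (pos_of i).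
Definition row_of (f : nat * nat -> C) : 'rV[C]_N := \row_j f (pos_of j).

Definition kprod (f g : nat * nat -> nat * nat -> C) x z : C :=
  psum (fun y => f x y * g y z).

Lemma kprodC f g x z : kprod f g x z = psum (fun y => g y z * f x y).
Proof. by apply: eq_bigr => j _; apply: eq_bigr => l _; rewrite mulrC. Qed.

Lemma mx_of_mul f g : mx_of f *m mx_of g = mx_of (kprod f g).
Proof.
apply/matrixP => i k; rewrite !mxE /kprod.
rewrite -(sum_positions (fun y => f (pos_of i) y * g y (pos_of k))).
by apply: eq_bigr => j _; rewrite !mxE.
Qed.

Lemma mx_of_mul_col f h : mx_of f *m col_of h = col_of (fun x => psum (fun y => f x y * h y)).
Proof.
apply/matrixP => i k; rewrite !mxE -(sum_positions (fun y => f (pos_of i) y * h y)).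
by apply: eq_bigr => j _; rewrite !mxE.
Qed.

Lemma row_of_mul_mx h f : row_of h *m mx_of f = row_of (fun z => psum (fun y => h y * f y z)).
Proof.
apply/matrixP => i k; rewrite !mxE -(sum_positions (fun y => h y * f y (pos_of k))).
by apply: eq_bigr => j _; rewrite !mxE.
Qed.

Lemma col_of_mul_row h k : col_of h *m row_of k = mx_of (fun x y => h x * k y).
Proof. by apply/matrixP => i j; rewrite !mxE big_ord1 !mxE. Qed.

Lemma mx_of_ext f g : (forall x z, valid_pos x -> valid_pos z -> f x z = g x z) ->
  mx_of f = mx_of g.
Proof. by move=> H; apply/matrixP => i j; rewrite !mxE H // pos_of_valid. Qed.

Lemma col_of_ext f g : (forall x, valid_pos x -> f x = g x) -> col_of f = col_of g.
Proof. by move=> H; apply/matrixP => i j; rewrite !mxE H // pos_of_valid. Qed.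

Lemma row_of_ext f g : (forall x, valid_pos x -> f x = g x) -> row_of f = row_of g.
Proof. by move=> H; apply/matrixP => i j; rewrite !mxE H // pos_of_valid. Qed.

Lemma psum_one_block (j0 : nat) (h : nat * nat -> C) : (j0 < nb)%N ->
  (forall j l, j != j0 -> h (j, l) = 0) ->
  psum h = \sum_(l < bsize j0) h (j0, val l).
Proof.
move=> hj H; rewrite /psum (bigD1 (Ordinal hj)) //= [X in _ + X]big1 ?addr0 // => j hne.
apply: big1 => l _; apply: H.
by apply: contra hne => /eqP e; apply/eqP/val_inj.
Qed.

Lemma sum_delta n a (F : nat -> C) :
  \sum_(l < n) (if val l == a then F (val l) else 0) = if (a < n)%N then F a else 0.
Proof.
case: ltnP => h.
  rewrite (bigD1 (Ordinal h)) //= eqxx [X in _ + X]big1 ?addr0 // => l hl.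
  by case: eqP => // e; case/eqP: hl; apply: val_inj.
apply: big1 => l _; case: eqP => // e.
by have := ltn_ord l; rewrite -[nat_of_ord l]/(val l) e => hl; lia.
Qed.

Definition gam_ker (x y : nat * nat) : C :=
  if x.1 == y.1 then (if x.2 == y.2 then kappa_at x else if x.2 == y.2.+1 then 1 else 0)
  else 0.

Lemma Gam_mx_of : Gam BL = mx_of gam_ker.
Proof. by apply/matrixP => i j; rewrite !mxE. Qed.

Lemma Gam_tr_mx_of : (Gam BL)^T = mx_of (fun x y => gam_ker y x).
Proof. by apply/matrixP => i j; rewrite !mxE. Qed.

Lemma psum_gam_row x (T : nat * nat -> C) : valid_pos x ->
  psum (fun y => gam_ker x y * T y)
  = kappa_at x * T x + (if x.2 is l.+1 then T (x.1, l) else 0).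
Proof.
case: x => j0 l0 /andP [/= hj hl].
rewrite (@psum_one_block j0 _ hj); last first.
  by move=> j l hne; rewrite /gam_ker /= eq_sym (negbTE hne) mul0r.
rewrite (eq_bigr (fun l : 'I_(bsize j0) =>
   (if val l == l0 then kappa_at (j0, l0) * T (j0, val l) else 0)
   + (if l0 is l'.+1 then (if val l == l' then T (j0, val l) else 0) else 0))); last first.
  move=> l _; rewrite /gam_ker /= eqxx.
  case: l0 hl => [|l0] hl.
    case: eqP => [<-|ne]; first by rewrite addr0.
    by rewrite mul0r addr0; case: eqP => // e; case: ne.
  case: (eqVneq (val l) l0.+1) => [->|ne]; first by rewrite ifF ?addr0 //; lia.
  by rewrite add0r eqSS eq_sym; case: eqP => _; rewrite ?mul1r ?mul0r.
rewrite big_split /= (sum_delta _ _ (fun v => kappa_at (j0, l0) * T (j0, v))) hl.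
case: l0 hl => [|l0] hl /=; first by rewrite big1 // addr0.
by rewrite (sum_delta _ _ (fun v => T (j0, v))) ifT //; lia.
Qed.

Lemma psum_gam_col z (T : nat * nat -> C) : valid_pos z ->
  psum (fun y => gam_ker y z * T y)
  = kappa_at z * T z + (if (z.2.+1 < bsize z.1)%N then T (z.1, z.2.+1) else 0).
Proof.
case: z => j0 l0 /andP [/= hj hl].
rewrite (@psum_one_block j0 _ hj); last first.
  by move=> j l hne; rewrite /gam_ker /= (negbTE hne) mul0r.
rewrite (eq_bigr (fun l : 'I_(bsize j0) =>
   (if val l == l0 then kappa_at (j0, l0) * T (j0, val l) else 0)
   + (if val l == l0.+1 then T (j0, val l) else 0))); last first.
  move=> l _; rewrite /gam_ker /= eqxx.
  case: eqP => [->|ne]; first by rewrite ifF ?addr0 //; lia.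
  by rewrite add0r; case: eqP => _; rewrite ?mul1r ?mul0r.
rewrite big_split /= (sum_delta _ _ (fun v => kappa_at (j0, l0) * T (j0, v))) hl.
by rewrite (sum_delta _ _ (fun v => T (j0, v))).
Qed.

Definition toep_ker (phi : nat -> nat -> C) (x y : nat * nat) : C :=
  if (x.1 == y.1) && (y.2 <= x.2)%N then phi x.1 (x.2 - y.2)%N else 0.

Definition toep_down (phi : nat -> nat -> C) (j d : nat) : C :=
  if d is d'.+1 then phi j d' else 0.

(* The symbol of Gamma itself is kappa_j + (shift down); hence multiplying a
   Toeplitz matrix by Gamma, on either side, multiplies its symbol by it. *)
Definition gam_symbol (phi : nat -> nat -> C) (j d : nat) : C :=
  bk (nth (block0 C) BL j) * phi j d + toep_down phi j d.

Lemma Gam_mul_toep phi : Gam BL *m mx_of (toep_ker phi) = mx_of (toep_ker (gam_symbol phi)).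
Proof.
rewrite Gam_mx_of mx_of_mul; apply: mx_of_ext => x z hx _.
rewrite /kprod (@psum_gam_row x (fun y => toep_ker phi y z)) //.
case: x z hx => [j l] [j' l'] _; rewrite /toep_ker /gam_symbol /toep_down /=.
case: (eqVneq j j') => [_|_] /=; last by rewrite mulr0 add0r; case: l.
case: (leqP l' l) => h; last by case: l h => [|l] h; rewrite ?ifF ?mulr0 ?addr0 //; lia.
case: l h => [|l] h; first by rewrite sub0n addr0.
case: (leqP l' l) => h'; first by rewrite subSn.
by rewrite /= (_ : l' = l.+1) ?subnn ?addr0 //; lia.
Qed.

Lemma toep_mul_Gam phi : mx_of (toep_ker phi) *m Gam BL = mx_of (toep_ker (gam_symbol phi)).
Proof.
rewrite Gam_mx_of mx_of_mul; apply: mx_of_ext => x z hx hz.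
rewrite kprodC (@psum_gam_col z (toep_ker phi x)) //.
case: x z hx hz => [j l] [j' l'] /andP [_ /= hl] _; rewrite /toep_ker /gam_symbol /toep_down /=.
case: (eqVneq j j') => [<-|ne] /=; last by rewrite mulr0 add0r; case: ifP.
rewrite /kappa_at /block_at /=; case: (leqP l' l) => h; last first.
  by rewrite mulr0 add0r [(l' < l)%N]ltnNge (ltnW h) /= ?if_same.
case: (eqVneq l l') => [->|ne]; first by rewrite subnn ltnn /= if_same addr0.
have lt : (l' < l)%N by rewrite ltn_neqAle eq_sym ne h.
have ltb : (l'.+1 < bsize j)%N by lia.
by rewrite ltb lt -(subnSK lt).
Qed.

Lemma Gam_toep_comm phi : Gam BL *m mx_of (toep_ker phi) = mx_of (toep_ker phi) *m Gam BL.
Proof. by rewrite Gam_mul_toep toep_mul_Gam. Qed.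

Lemma toep_displacement (p : C) phi phi' :
  (forall j d, (j < nb)%N ->
    (p - bk (nth (block0 C) BL j)) * phi' j d - toep_down phi' j d
    = (p + bk (nth (block0 C) BL j)) * phi j d + toep_down phi j d) ->
  (p%:M - Gam BL) *m mx_of (toep_ker phi') = (p%:M + Gam BL) *m mx_of (toep_ker phi).
Proof.
move=> H; rewrite mulmxBl mulmxDl !mul_scalar_mx !Gam_mul_toep.
apply/matrixP => i k; rewrite !mxE /toep_ker /gam_symbol.
case: ifP => [/andP [_ _]|_]; last by rewrite mulr0 subr0 addr0.
have /andP [hj _] := pos_of_valid i.
by rewrite opprD addrA -mulrBl H // mulrDl addrA.
Qed.

Definition e0_col : 'cV[C]_N := col_of (fun x => (x.2 == 0%N)%:R).
Definition e0_row : 'rV[C]_N := row_of (fun x => (x.2 == 0%N)%:R).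

Lemma toep_mul_e0 phi : mx_of (toep_ker phi) *m e0_col = col_of (fun x => phi x.1 x.2).
Proof.
rewrite /e0_col mx_of_mul_col; apply: col_of_ext => -[j0 l0] /andP [/= hj hl].
rewrite (@psum_one_block j0 _ hj); last first.
  by move=> j l hne; rewrite /toep_ker /= eq_sym (negbTE hne) mul0r.
rewrite (eq_bigr (fun l : 'I_(bsize j0) =>
   if val l == 0%N then toep_ker phi (j0, l0) (j0, val l) else 0)); last first.
  by move=> l _; case: eqP => _; rewrite ?mulr1 ?mulr0.
rewrite (sum_delta _ _ (fun v => toep_ker phi (j0, l0) (j0, v))) ifT; last by lia.
by rewrite /toep_ker /= eqxx /= subn0.
Qed.

Definition hankel_ker (x y : nat * nat) : C :=
  if (x.1 == y.1) && (x.2 + y.2 < bsize x.1)%N then nth 0 (bc (block_at x)) (x.2 + y.2)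
  else 0.

Lemma e0_mul_hankel : e0_row *m mx_of hankel_ker = row_of (fun z => nth 0 (bc (block_at z)) z.2).
Proof.
rewrite /e0_row row_of_mul_mx; apply: row_of_ext => -[j0 l0] /andP [/= hj hl].
rewrite (@psum_one_block j0 _ hj); last first.
  by move=> j l hne; rewrite /hankel_ker /= (negbTE hne) mulr0.
rewrite (eq_bigr (fun l : 'I_(bsize j0) =>
   if val l == 0%N then hankel_ker (j0, val l) (j0, l0) else 0)); last first.
  by move=> l _; case: eqP => _; rewrite ?mul1r ?mul0r.
rewrite (sum_delta _ _ (fun v => hankel_ker (j0, v) (j0, l0))) ifT; last by lia.
by rewrite /hankel_ker /= eqxx /= add0n hl.
Qed.

Lemma hankel_Gam_intertwine : mx_of hankel_ker *m Gam BL = (Gam BL)^T *m mx_of hankel_ker.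
Proof.
rewrite Gam_tr_mx_of Gam_mx_of !mx_of_mul; apply: mx_of_ext => x z hx hz.
rewrite kprodC (@psum_gam_col z (hankel_ker x)) //.
rewrite /kprod (@psum_gam_col x (fun y => hankel_ker y z)) //.
case: x z hx hz => [j l] [j' t] /andP [/= hj hl] /andP [/= hj' ht].
rewrite /hankel_ker /kappa_at /block_at /=.
case: (eqVneq j j') => [<-|ne] /=; last by rewrite !mulr0 !add0r; case: ifP; case: ifP.
congr (_ + _); rewrite addnS addSn.
case: (ltnP (l + t).+1 (bsize j)) => h; first by rewrite ifT ?ifT //; lia.
by case: ifP => // _; case: ifP.
Qed.

Definition cauchy_ker (x y : nat * nat) : C := cauchy_coef (kappa_at x + kappa_at y) x.2 y.2.

Lemma Gam_cauchy_lyapunov :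
  (forall x z, valid_pos x -> valid_pos z -> kappa_at x + kappa_at z != 0) ->
  Gam BL *m mx_of cauchy_ker + mx_of cauchy_ker *m (Gam BL)^T = e0_col *m e0_row.
Proof.
move=> hs; rewrite Gam_tr_mx_of Gam_mx_of !mx_of_mul /e0_col /e0_row col_of_mul_row.
apply/matrixP => i k; rewrite !mxE.
have := pos_of_valid i; have := pos_of_valid k.
move: (pos_of i) (pos_of k) => x z hz hx.
rewrite [X in _ + X]kprodC /kprod (@psum_gam_row x (fun y => cauchy_ker y z)) //.
rewrite (@psum_gam_row z (cauchy_ker x)) //.
have := cauchy_coef_rec x.2 z.2 (hs x z hx hz).
case: x z {hx hz} => [j l] [j' t] /=.
rewrite /cauchy_ker /kappa_at /block_at /= => <-.
by case: l => [|l]; case: t => [|t]; rewrite ?addr0; ring.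
Qed.

Lemma Hm_mx_of : Hm BL = mx_of hankel_ker.
Proof. by apply/matrixP => i j; rewrite !mxE. Qed.
Lemma Gm_mx_of : Gm BL = mx_of cauchy_ker.
Proof. by apply/matrixP => i j; rewrite !mxE. Qed.
Lemma Am_mx_of : Am BL = mx_of (toep_ker (fun j d => nth 0 (ba (nth (block0 C) BL j)) d)).
Proof. by apply/matrixP => i j; rewrite !mxE. Qed.
Lemma Fm_mx_of p q rho0 n m :
  Fm BL p q rho0 n m
  = mx_of (toep_ker (fun j d => tau p q rho0 n m d (bk (nth (block0 C) BL j)))).
Proof. by apply/matrixP => i j; rewrite !mxE. Qed.
Lemma rv_col_of p q rho0 n m :
  rv BL p q rho0 n m = col_of (fun x => tau p q rho0 n m x.2 (kappa_at x)).
Proof. by apply/matrixP => i j; rewrite !mxE. Qed.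
Lemma cv_row_of : cv BL = row_of (fun z => nth 0 (bc (block_at z)) z.2).
Proof. by apply/matrixP => i j; rewrite !mxE. Qed.

End BlockMatrices.

Section Structure.
Variable C : numClosedFieldType.
Variable BL : seq (block C).
Variables p q rho0 : C.
Local Notation nb := (size BL).
Local Notation G := (Gam BL).
Local Notation F n m := (Fm BL p q rho0 n m).
Local Notation A := (Am BL).
Local Notation M n m := (Mm BL p q rho0 n m).
Local Notation r n m := (Am BL *m rv BL p q rho0 n m).

Hypothesis p_q_off_spectrum : forall j, (j < nb)%N ->
  let k := bk (nth (block0 C) BL j) in [/\ p != k, p != - k, q != k & q != - k].
Hypothesis spectrum_sum_neq0 : forall x z, valid_pos BL x -> valid_pos BL z ->
  kappa_at BL x + kappa_at BL z != 0.

(* A and F are block lower-triangular Toeplitz, so they commute with Gamma. *)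
Lemma Gam_Am_comm : G *m A = A *m G.
Proof. by rewrite Am_mx_of Gam_toep_comm. Qed.

Lemma Gam_Fm_comm n m : G *m F n m = F n m *m G.
Proof. by rewrite Fm_mx_of Gam_toep_comm. Qed.

Lemma rv_Fm n m : rv BL p q rho0 n m = F n m *m e0_col BL.
Proof. by rewrite Fm_mx_of toep_mul_e0 rv_col_of. Qed.

Lemma cv_Hm : cv BL = e0_row BL *m Hm BL.
Proof. by rewrite Hm_mx_of e0_mul_hankel cv_row_of. Qed.

Lemma Mm_sylvester n m : G *m M n m + M n m *m G = r n m *m cv BL.
Proof.
rewrite /Mm.
have left_comm : G *m (A *m F n m *m Gm BL *m Hm BL)
    = A *m F n m *m (G *m Gm BL) *m Hm BL.
  by rewrite !mulmxA Gam_Am_comm -!mulmxA (mulmxA G) Gam_Fm_comm -!mulmxA.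
have right_comm : A *m F n m *m Gm BL *m Hm BL *m G
    = A *m F n m *m (Gm BL *m G^T) *m Hm BL.
  by rewrite -!mulmxA Hm_mx_of hankel_Gam_intertwine -Hm_mx_of.
rewrite left_comm right_comm -mulmxDl -mulmxDr Gm_mx_of Gam_cauchy_lyapunov //.
by rewrite rv_Fm cv_Hm !mulmxA.
Qed.

Lemma Fm_shift_n n m : (p%:M - G) *m F (n + 1) m = (p%:M + G) *m F n m.
Proof.
rewrite !Fm_mx_of; apply: toep_displacement => j d hj.
by have [h1 h2 h3 h4] := p_q_off_spectrum hj; apply: tau_shift_n.
Qed.

Lemma Fm_shift_m n m : (q%:M - G) *m F n (m + 1) = (q%:M + G) *m F n m.
Proof.
rewrite !Fm_mx_of; apply: toep_displacement => j d hj.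
by have [h1 h2 h3 h4] := p_q_off_spectrum hj; apply: tau_shift_m.
Qed.

(* Any dispersion relation of F is inherited by r = A F e and M = A F G H,
   since A commutes with Gamma. *)
Lemma dispersion_lift (s : C) n m n' m' :
  (s%:M - G) *m F n' m' = (s%:M + G) *m F n m ->
  (s%:M - G) *m r n' m' = (s%:M + G) *m r n m /\
  (s%:M - G) *m M n' m' = (s%:M + G) *m M n m.
Proof.
move=> hF; have AmB : (s%:M - G) *m A = A *m (s%:M - G).
  by rewrite mulmxBl mulmxBr Gam_Am_comm scalar_mxC.
have ApB : (s%:M + G) *m A = A *m (s%:M + G).
  by rewrite mulmxDl mulmxDr Gam_Am_comm scalar_mxC.
split; first by rewrite !mulmxA AmB ApB -!mulmxA !rv_Fm !mulmxA -(mulmxA A) hF mulmxA.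
by rewrite /Mm !mulmxA AmB ApB -!mulmxA (mulmxA _ (F n' m')) hF !mulmxA.
Qed.

(* Together with the Sylvester equation, a dispersion relation for M gives
   the two rank-one displacement equations for U = I + M used in
   [resolvent_factor_left] and [resolvent_factor_right]. *)
Lemma displacement_left (s : C) n m n' m' :
  (s%:M - G) *m M n' m' = (s%:M + G) *m M n m ->
  (s%:M - G) *m (1%:M + M n' m') - (1%:M + M n m) *m (s%:M - G) = r n m *m cv BL.
Proof.
move=> hM; rewrite mulmxDr mulmx1 mulmxDl mul1mx [_ - G + _]addrC addrKA hM.
rewrite -Mm_sylvester mulmxDl mulmxBr mul_scalar_mx mul_mx_scalar.
by rewrite [_ *: _ + _]addrC addrKA opprK.
Qed.

Lemma displacement_right (s : C) n m n' m' :
  (s%:M - G) *m M n' m' = (s%:M + G) *m M n m ->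
  (1%:M + M n' m') *m (s%:M + G) - (s%:M + G) *m (1%:M + M n m) = r n' m' *m cv BL.
Proof.
move=> hM; rewrite mulmxDl mul1mx mulmxDr mulmx1 [_ + G + _]addrC addrKA -hM.
rewrite -Mm_sylvester mulmxDr mulmxBl mul_scalar_mx mul_mx_scalar.
by rewrite [_ *: _ + _]addrC addrKA opprK addrC.
Qed.

End Structure.

Theorem mainTheorem11 (C : numClosedFieldType) (p q rho0 a b : C)
  (ks cs : seq C) (J : seq (block C)) :
  size ks = size cs ->
  all (fun B => (0 < bsz B)%N && (size (ba B) == bsz B)) J ->
  (forall lam mu, lam \in map (@bk C) (all_blocks ks cs J) ->
     mu \in map (@bk C) (all_blocks ks cs J) -> lam + mu != 0) ->
  (forall lam, lam \in map (@bk C) (all_blocks ks cs J) ->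
     [/\ p != lam, p != - lam, q != lam & q != - lam]) ->
  (a%:M + Gam (all_blocks ks cs J)) \in unitmx ->
  (b%:M + Gam (all_blocks ks cs J)) \in unitmx ->
  (forall n m : int, (1%:M + Mm (all_blocks ks cs J) p q rho0 n m) \in unitmx) ->
  forall n m : int,
    let S := fun n' m' => Sab (all_blocks ks cs J) p q rho0 a b n' m' in
    let S0 := S n m in
    let St := S (n + 1) m in
    let Sh := S n (m + 1) in
    let Sht := S (n + 1) (m + 1) in
    1 - (q + b) * Sht + (q - a) * St != 0 ->
    1 - (p + a) * St + (p - b) * S0 != 0 ->
    (1 - (p + b) * Sht + (p - a) * Sh) / (1 - (q + b) * Sht + (q - a) * St)
    = (1 - (q + a) * Sh + (q - b) * S0) / (1 - (p + a) * St + (p - b) * S0).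
Proof.
move=> _ _ hsum hpq uA uB uU n m S S0 St Sh Sht.
set BL := all_blocks ks cs J.
have hk j : (j < size BL)%N -> let k := bk (nth (block0 C) BL j) in
    [/\ p != k, p != - k, q != k & q != - k].
  by move=> hj /=; apply/hpq/map_f/mem_nth.
have hs x z : valid_pos BL x -> valid_pos BL z -> kappa_at BL x + kappa_at BL z != 0.
  by move=> /andP [hx _] /andP [hz _]; apply: hsum; apply/map_f/mem_nth.
have [rp00 Mp00] := dispersion_lift (Fm_shift_n rho0 hk n m).
have [rp01 Mp01] := dispersion_lift (Fm_shift_n rho0 hk n (m + 1)).
have [rq00 Mq00] := dispersion_lift (Fm_shift_m rho0 hk n m).
have [rq10 Mq10] := dispersion_lift (Fm_shift_m rho0 hk (n + 1) m).
have e1 := resolvent_factor_left uA uB (uU _ _) (uU _ _) rp01 (displacement_left hs Mp01).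
have e2 := resolvent_factor_left uA uB (uU _ _) (uU _ _) rq10 (displacement_left hs Mq10).
have e3 := resolvent_factor_right uA uB (uU _ _) (uU _ _) rq00 (displacement_right hs Mq00).
have e4 := resolvent_factor_right uA uB (uU _ _) (uU _ _) rp00 (displacement_right hs Mp00).
rewrite /S0 /St /Sh /Sht /S /Sab e1 e2 e3 e4.
rewrite !mulf_eq0 !negb_or => /andP [hY hW] /andP [_ hY0].
by field; rewrite hY hW hY0.
Qed.
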